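(* Let $\phi$ be an LTL formula. If some tableau for $\phi$ has a ticked leaf, then $\phi$ is satisfiable. Moreover, this remains true for tableaux in which the PRUNE and PRUNE$_0$ rules are not applied even when applicable, i.e. every ticked branch encodes a model of $\phi$.
   Context: LTL formulas over a countable set $AP$ of atoms are built from atoms $p\in AP$ and the constant $\top$ using $\neg\alpha$, $\alpha\wedge\beta$, $X\alpha$ and $\alpha U\beta$. We write $\bot$ for $\neg\top$. A structure is a triple $(S,R,g)$ where $S$ is a finite set, $R\subseteq S\times S$ is serial (every state has an $R$-successor), and $g:S\to 2^{AP}$. A fullpath is a sequence $\sigma=\langle s_0,s_1,\dots\rangle$ with $(s_i,s_{i+1})\in R$ for all $i$. We write $\sigma_i=s_i$ and $\sigma_{\ge j}=\langle s_j,s_{j+1},\dots\rangle$. Truth is defined as follows: - $\sigma\models p$ iff $p\in g(\sigma_0)$; - $\sigma\models\top$ always; - $\neg$ and $\wedge$ are classical; - $\sigma\models X\alpha$ iff $\sigma_{\ge1}\models\alpha$; - $\sigma\models\alpha U\beta$ iff there is $i\ge0$ with $\sigma_{\ge i}\models\beta$ and $\sigma_{\ge j}\models\alpha$ for all $0\le j<i$. A formula is satisfiable iff it is true on some fullpath of some structure. Tableau. A tableau for $\phi$ is a finite rooted tree. Each node $u$ carries a finite set of formulas $\Gamma_u$ (its label), and the root is labelled $\{\phi\}$. We write $u<v$ when $u$ is a proper ancestor of $v$ and $u\le v$ when it is an ancestor or equal. A formula is elementary if it is an atom, a negated atom, or of the form $X\alpha$ or $\neg X\alpha$. A label is poised if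 it is nonempty, contains no pair $\alpha,\neg\alpha$, and all its formulas are elementary. An $X$-eventuality of a poised label is a member of the form $X(\alpha U\beta)$. Static rules are written ''parent label / children'', where $\{\chi\}\mathbin{\dot\cup}\Delta$ means $\chi\notin\Delta$: - EMPTY: $\{\}$ / tick. - CONTRADICTION: $\{\alpha,\neg\alpha\}\mathbin{\dot\cup}\Delta$ / cross. - $\neg\top$: $\{\neg\top\}\mathbin{\dot\cup}\Delta$ / cross. - $\top$: $\{\top\}\mathbin{\dot\cup}\Delta$ / $\Delta$. - $\wedge$: $\{\alpha\wedge\beta\}\mathbin{\dot\cup}\Delta$ / $\Delta\cup\{\alpha,\beta\}$. - $U$: $\{\alpha U\beta\}\mathbin{\dot\cup}\Delta$ / two children $\Delta\cup\{\beta\}$ and $\Delta\cup\{\alpha,X(\alpha U\beta)\}$. - $\neg\neg$: $\{\neg\neg\alpha\}\mathbin{\dot\cup}\Delta$ / $\Delta\cup\{\alpha\}$. - $\neg\wedge$: $\{\neg(\alpha\wedge\beta)\}\mathbin{\dot\cup}\Delta$ / two children $\Delta\cup\{\neg\alpha\}$ and $\Delta\cup\{\neg\beta\}$. - $\neg U$: $\{\neg(\alpha U\beta)\}\mathbin{\dot\cup}\Delta$ / two children $\Delta\cup\{\neg\alpha,\neg\beta\}$ and $\Delta\cup\{\neg\beta,X\neg(\alpha U\beta)\}$. Non-static rules apply only to a leaf $v$ with poised label. The first applicable one in the following list is used. - LOOP: if some $u<v$ has poised $\Gamma_u\supseteq\Gamma_v$, and for every $X(\alpha U\beta)\in\Gamma_u$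 there is $w$ with $u<w\le v$ and $\beta\in\Gamma_w$, then $v$ is ticked. - PRUNE: if $u<v'<v$ all have the same poised label $\Gamma$, and for every $X(\alpha U\beta)\in\Gamma$, whenever some $x$ with $v'<x\le v$ has $\beta\in\Gamma_x$ there is $y$ with $u<y\le v'$ and $\beta\in\Gamma_y$, then $v$ is crossed. - PRUNE$_0$: if $u<v$ share the same poised label $\Gamma$, $\Gamma$ contains at least one $X$-eventuality, and for no $X(\alpha U\beta)\in\Gamma$ is there $x$ with $u<x\le v$ and $\beta\in\Gamma_x$, then $v$ is crossed. - TRANSITION: otherwise $v$ gets one child labelled $\{\alpha: X\alpha\in\Gamma_v\}\cup\{\neg\alpha:\neg X\alpha\in\Gamma_v\}$. A tableau is constructed from the root by repeatedly choosing any leaf that is neither ticked nor crossed and applying an applicable rule. For non-poised labels this means any applicable static rule to any suitable pivot formula. A tableau is finished if every leaf is ticked or crossed, and successful if some leaf is ticked. *)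

From Stdlib Require Import List Arith.
Import ListNotations.

Inductive form : Type :=
| Atom : nat -> form
| Top : form
| Neg : form -> form
| And : form -> form -> form
| Next : form -> form
| Until : form -> form -> form.

Definition Bot : form := Neg Top.

Definition suffix {St : Type} (i : nat) (sigma : nat -> St) : nat -> St :=
  fun k => sigma (i + k).

Fixpoint holds {St : Type} (g : St -> nat -> Prop) (sigma : nat -> St) (f : form)
  : Prop :=
  match f with
  | Atom p => g (sigma 0) p
  | Top => True
  | Neg a => ~ holds g sigma a
  | And a b => holds g sigma a /\ holds g sigma b
  | Next a => holds g (suffix 1 sigma) a
  | Until a b => exists i, holds g (suffix i sigma) b /\
                   forall j, j < i -> holds g (suffix j sigma) a
  end.

Definition finite_type (S : Type) : Prop := exists l : list S, forall s, In s l.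
Definition serial {St : Type} (R : St -> St -> Prop) : Prop :=
  forall s, exists t, R s t.
Definition fullpath {St : Type} (R : St -> St -> Prop) (sigma : nat -> St) : Prop :=
  forall i, R (sigma i) (sigma (S i)).

Definition satisfiable (phi : form) : Prop :=
  exists (S : Type) (R : S -> S -> Prop) (g : S -> nat -> Prop),
    finite_type S /\ serial R /\
    exists sigma : nat -> S, fullpath R sigma /\ holds g sigma phi.

(** * Labels: finite sets of formulas, represented by lists
      (compared extensionally, i.e. as sets). *)
Definition label := list form.
Definition set_eq (A B : label) : Prop := forall x, In x A <-> In x B.
Definition subset (A B : label) : Prop := forall x, In x A -> In x B.

Definition elementary (f : form) : Prop :=
  match f with
  | Atom _ => True
  | Neg (Atom _) => True
  | Next _ => True
  | Neg (Next _) => True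
  | _ => False
  end.

Definition poised (G : label) : Prop :=
  G <> [] /\
  (forall a, In a G -> ~ In (Neg a) G) /\
  (forall f, In f G -> elementary f).

Definition rule_child (G : label) (chi : form) (add : list form) (c : label) : Prop :=
  forall x, In x c <-> ((In x G /\ x <> chi) \/ In x add).

Definition static_tick (G : label) : Prop := G = [].

Definition static_cross (G : label) : Prop :=
  (exists a, In a G /\ In (Neg a) G)
  \/ In (Neg Top) G.

Definition static1 (G c : label) : Prop :=
  (In Top G /\ rule_child G Top [] c)
  \/ (exists a b, In (And a b) G /\ rule_child G (And a b) [a; b] c)
  \/ (exists a, In (Neg (Neg a)) G /\ rule_child G (Neg (Neg a)) [a] c).

Definition static2 (G c1 c2 : label) : Prop :=
  (exists a b, In (Until a b) G /\
     rule_child G (Until a b) [b] c1 /\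
     rule_child G (Until a b) [a; Next (Until a b)] c2)
  \/ (exists a b, In (Neg (And a b)) G /\
     rule_child G (Neg (And a b)) [Neg a] c1 /\
     rule_child G (Neg (And a b)) [Neg b] c2)
  \/ (exists a b, In (Neg (Until a b)) G /\
     rule_child G (Neg (Until a b)) [Neg a; Neg b] c1 /\
     rule_child G (Neg (Until a b)) [Neg b; Next (Neg (Until a b))] c2).

(** Non-static rules.  [br] is the branch root..v (labels in order),
    so v has index [length br - 1] =: n, and u < v means index u < n. *)
Definition lab (br : list label) (i : nat) : label := nth i br [].

Definition loop_cond (br : list label) : Prop :=
  let n := length br - 1 in
  exists u, u < n /\ poised (lab br u) /\ subset (lab br n) (lab br u) /\
    forall a b, In (Next (Until a b)) (lab br u) ->
      exists w, u < w /\ w <= n /\ In b (lab br w).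

Definition prune_cond (br : list label) : Prop :=
  let n := length br - 1 in
  exists u v', u < v' /\ v' < n /\ poised (lab br n) /\
    set_eq (lab br u) (lab br n) /\ set_eq (lab br v') (lab br n) /\
    forall a b, In (Next (Until a b)) (lab br n) ->
      (exists x, v' < x /\ x <= n /\ In b (lab br x)) ->
      exists y, u < y /\ y <= v' /\ In b (lab br y).

Definition prune0_cond (br : list label) : Prop :=
  let n := length br - 1 in
  exists u, u < n /\ poised (lab br n) /\ set_eq (lab br u) (lab br n) /\
    (exists a b, In (Next (Until a b)) (lab br n)) /\
    ~ (exists a b x, In (Next (Until a b)) (lab br n) /\
                     u < x /\ x <= n /\ In b (lab br x)).

Definition transition_child (G c : label) : Prop :=
  forall x, In x c <-> (In (Next x) G \/ exists a, x = Neg a /\ In (Neg (Next a)) G).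

(** * Tableaux (partial constructions).  A node is an open (not yet expanded)
    leaf, a ticked leaf, a crossed leaf, or a node with one or two children. *)
Inductive mark : Type := Open | Tick | Cross.

Inductive tree : Type :=
| Leaf : label -> mark -> tree
| Node1 : label -> tree -> tree
| Node2 : label -> tree -> tree -> tree.

Definition root_label (t : tree) : label :=
  match t with Leaf G _ => G | Node1 G _ => G | Node2 G _ _ => G end.

(* [use_prune = true]: the tableau of the paper (first applicable non-static
   rule among LOOP, PRUNE, PRUNE0, TRANSITION).
   [use_prune = false]: PRUNE and PRUNE0 are never applied, i.e. at a poised
   leaf LOOP is used if applicable and TRANSITION otherwise. *)
Definition pruned (use_prune : bool) (br : list label) : Prop :=
  use_prune = true /\ (prune_cond br \/ prune0_cond br).

(* [valid up anc t]: t is correctly built given the labels [anc] of the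
   proper ancestors of its root (listed from the tableau root downward). *)
Fixpoint valid (up : bool) (anc : list label) (t : tree) : Prop :=
  match t with
  | Leaf G Open => True
  | Leaf G Tick =>
      static_tick G \/ (poised G /\ loop_cond (anc ++ [G]))
  | Leaf G Cross =>
      static_cross G \/
      (poised G /\ ~ loop_cond (anc ++ [G]) /\ pruned up (anc ++ [G]))
  | Node1 G t1 =>
      ((~ poised G /\ static1 G (root_label t1)) \/
       (poised G /\ ~ loop_cond (anc ++ [G]) /\ ~ pruned up (anc ++ [G]) /\
        transition_child G (root_label t1)))
      /\ valid up (anc ++ [G]) t1
  | Node2 G t1 t2 =>
      ~ poised G /\ static2 G (root_label t1) (root_label t2) /\
      valid up (anc ++ [G]) t1 /\ valid up (anc ++ [G]) t2
  end.

Definition is_tableau (up : bool) (phi : form) (t : tree) : Prop :=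
  root_label t = [phi] /\ valid up [] t.

Fixpoint has_ticked_leaf (t : tree) : Prop :=
  match t with
  | Leaf _ Tick => True
  | Leaf _ _ => False
  | Node1 _ t1 => has_ticked_leaf t1
  | Node2 _ t1 t2 => has_ticked_leaf t1 \/ has_ticked_leaf t2
  end.

From Stdlib Require Import List Arith Lia Classical ClassicalEpsilon.
Import ListNotations.

(* Along a ticked branch, the poised labels, read in order, are the states of
   the model, and each poised label passes its X-formulas to the next state.
   A LOOP leaf is included in its companion label, so the last state is
   identified with the companion and the path becomes ultimately periodic.
   Every formula of a label then holds at the state of the block (run of
   static steps) containing it: this is proved for f and ¬f simultaneously by
   structural induction, static rules decomposing formulas inside a block.
   The only delicate case is an until-formula whose eventuality is postponed
   up to the LOOP leaf: it is carried around the loop once more, and LOOP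
   guarantees that the eventuality is met there. *)

Lemma holds_iff {St1 St2 : Type} (g1 : St1 -> nat -> Prop) (g2 : St2 -> nat -> Prop)
  (f : form) : forall sigma1 sigma2,
  (forall k p, g1 (sigma1 k) p <-> g2 (sigma2 k) p) ->
  (holds g1 sigma1 f <-> holds g2 sigma2 f).
Proof.
  induction f as [p| |f IH|a IHa b IHb|f IH|a IHa b IHb];
    intros sigma1 sigma2 Hg; simpl.
  - apply Hg.
  - reflexivity.
  - now rewrite (IH _ _ Hg).
  - now rewrite (IHa _ _ Hg), (IHb _ _ Hg).
  - apply IH; intros; apply Hg.
  - assert (Hsuf : forall i k p,
        g1 (suffix i sigma1 k) p <-> g2 (suffix i sigma2 k) p) by (intros; apply Hg).
    split; intros (i & Hb & Ha); exists i; split;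
      try (intros j Hj; specialize (Ha j Hj)).
    all: first [ apply (IHb _ _ (Hsuf i)) | apply (IHa _ _ (Hsuf j)) ]; assumption.
Qed.

Section Runs.

Context {St : Type} (g : St -> nat -> Prop) (next : St -> St).

Definition run (s : St) : nat -> St := fun k => Nat.iter k next s.

Lemma holds_run_suffix (s : St) (i : nat) (f : form) :
  holds g (suffix i (run s)) f <-> holds g (run (Nat.iter i next s)) f.
Proof.
  apply holds_iff; intros k p; unfold suffix, run.
  now rewrite Nat.add_comm, Nat.iter_add.
Qed.

Lemma holds_run_next (s : St) (f : form) :
  holds g (run s) (Next f) <-> holds g (run (next s)) f.
Proof. exact (holds_run_suffix s 1 f). Qed.

Lemma holds_run_until (s : St) (a b : form) :
  holds g (run s) (Until a b) <->
  exists k, holds g (run (Nat.iter k next s)) b /\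
            forall j, j < k -> holds g (run (Nat.iter j next s)) a.
Proof.
  simpl; setoid_rewrite holds_run_suffix; reflexivity.
Qed.

Lemma holds_run_until_now (s : St) (a b : form) :
  holds g (run s) b -> holds g (run s) (Until a b).
Proof.
  intro Hb; apply holds_run_until; exists 0; split; [exact Hb | lia].
Qed.

Lemma holds_run_until_later (s : St) (a b : form) :
  holds g (run s) a -> holds g (run (next s)) (Until a b) ->
  holds g (run s) (Until a b).
Proof.
  intros Ha (k & Hb & Hk)%holds_run_until; apply holds_run_until.
  exists (S k); split; [now rewrite Nat.iter_succ_r |].
  intros [|j] Hj; [exact Ha |].
  rewrite Nat.iter_succ_r; apply Hk; lia.
Qed.

Lemma not_holds_run_until (P : St -> Prop) (a b : form) :
  (forall s, P s -> ~ holds g (run s) b) ->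
  (forall s, P s -> holds g (run s) a -> P (next s)) ->
  forall s, P s -> ~ holds g (run s) (Until a b).
Proof.
  intros Hb Ha s Hs (k & Hbk & Hak)%holds_run_until.
  revert s Hs Hbk Hak; induction k as [|k IH]; intros s Hs Hbk Hak.
  - exact (Hb s Hs Hbk).
  - apply (IH (next s)).
    + apply Ha; [exact Hs | exact (Hak 0 ltac:(lia))].
    + now rewrite <- Nat.iter_succ_r.
    + intros j Hj; rewrite <- Nat.iter_succ_r; apply Hak; lia.
Qed.

End Runs.

Lemma finite_bounded_nat (N : nat) : finite_type {k | k <= N}.
Proof.
  exists (flat_map (fun k => match le_dec k N with
                             | left h => [exist (fun k => k <= N) k h]
                             | right _ => []
                             end) (seq 0 (S N))).
  intros [k h]; apply in_flat_map; exists k; split; [apply in_seq; lia |].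
  destruct (le_dec k N) as [h'|h']; [| lia].
  left; f_equal; apply le_unique.
Qed.

Definition static_step (G c : label) : Prop :=
  static1 G c \/ (exists c2, static2 G c c2) \/ (exists c1, static2 G c1 c).

Definition branch_step (G c : label) : Prop :=
  (~ poised G /\ static_step G c) \/ (poised G /\ transition_child G c).

Definition decomposed (f : form) (c : label) : Prop :=
  match f with
  | Top => True
  | And a b => In a c /\ In b c
  | Neg (Neg a) => In a c
  | Neg (And a b) => In (Neg a) c \/ In (Neg b) c
  | Until a b => In b c \/ (In a c /\ In (Next (Until a b)) c)
  | Neg (Until a b) => (In (Neg a) c /\ In (Neg b) c) \/
                       (In (Neg b) c /\ In (Next (Neg (Until a b))) c)
  | _ => False
  end.

Lemma rule_child_pivot (G : label) (chi : form) (add c : label) (f : form) :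
  rule_child G chi add c -> In f G -> ~ In f c -> f = chi /\ incl add c.
Proof.
  intros Hc Hf Hnf; split.
  - apply NNPP; intro Hne; apply Hnf, Hc; left; auto.
  - intros x Hx; apply Hc; right; exact Hx.
Qed.

Lemma static_step_decomposed (G c : label) (f : form) :
  static_step G c -> In f G -> ~ In f c -> decomposed f c.
Proof.
  intros Hst Hf Hnf.
  destruct Hst as [[[_ Hc]|[(a & b & _ & Hc)|(a & _ & Hc)]]
                  |[(c2 & [(a & b & _ & Hc & _)|[(a & b & _ & Hc & _)|(a & b & _ & Hc & _)]])
                   |(c1 & [(a & b & _ & _ & Hc)|[(a & b & _ & _ & Hc)|(a & b & _ & _ & Hc)]])]];
    destruct (rule_child_pivot _ _ _ _ _ Hc Hf Hnf) as [-> Hadd]; simpl;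
    unfold incl in Hadd; simpl in Hadd; firstorder.
Qed.

Lemma elementary_not_decomposed (f : form) (c : label) :
  elementary f -> ~ decomposed f c.
Proof. destruct f as [| |[]| | |]; simpl; tauto. Qed.

Definition loops_back (L : nat -> label) (n u : nat) : Prop :=
  u < n /\ poised (L u) /\ subset (L n) (L u) /\
  forall a b, In (Next (Until a b)) (L u) -> exists w, u < w /\ w <= n /\ In b (L w).

Section TickedBranch.

Variables (L : nat -> label) (n u : nat).

Hypothesis branch_steps : forall i, i < n -> branch_step (L i) (L (S i)).
Hypothesis branch_end : L n = [] \/ (poised (L n) /\ loops_back L n u).
Hypothesis u_le_n : u <= n.

Fixpoint time (i : nat) : nat :=
  match i with
  | 0 => 0
  | S i => if excluded_middle_informative (poised (L i)) then S (time i) else time i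
  end.

Lemma time_S_poised (i : nat) : poised (L i) -> time (S i) = S (time i).
Proof. intro Hp; simpl; destruct excluded_middle_informative; tauto. Qed.

Lemma time_S_not_poised (i : nat) : ~ poised (L i) -> time (S i) = time i.
Proof. intro Hp; simpl; destruct excluded_middle_informative; tauto. Qed.

Lemma time_mono (i j : nat) : i <= j -> time i <= time j.
Proof. induction 1 as [|j _ IH]; simpl; [lia|]; destruct excluded_middle_informative; lia. Qed.

Lemma time_poised_lt (i j : nat) : poised (L i) -> i < j -> time i < time j.
Proof.
  intros Hp Hij; pose proof (time_mono (S i) j Hij).
  rewrite time_S_poised in * by exact Hp; lia.
Qed.

Lemma time_poised_inj (i j : nat) :
  poised (L i) -> poised (L j) -> time i = time j -> i = j.
Proof.
  intros Hi Hj Ht; destruct (lt_eq_lt_dec i j) as [[Hij|]|Hji]; [|assumption|].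
  - pose proof (time_poised_lt i j Hi Hij); lia.
  - pose proof (time_poised_lt j i Hj Hji); lia.
Qed.

Lemma time_between (i w j : nat) : i <= w <= j -> time i = time j -> time w = time i.
Proof. intros Hw Ht; pose proof (time_mono i w); pose proof (time_mono w j); lia. Qed.

Definition last_time : nat := time n.
Definition loop_time : nat := time u.

Definition step (s : nat) : nat := if S s <? last_time then S s else loop_time.

(* The last block, of time [last_time], is merged with the companion of the
   LOOP leaf.  If the branch ends with the empty label, no formula of the last
   block depends on its state. *)
Definition state (i : nat) : nat := if time i <? last_time then time i else loop_time.

Definition valuation (s p : nat) : Prop :=
  exists j, j < n /\ poised (L j) /\ state j = s /\ In (Atom p) (L j).

Definition sat (s : nat) (f : form) : Prop := holds valuation (run step s) f.

Lemma state_of_time (i j : nat) : time i = time j -> state i = state j.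
Proof. unfold state; intros ->; reflexivity. Qed.

Lemma state_poised (j : nat) : j < n -> poised (L j) -> state j = time j.
Proof.
  intros Hj Hp; unfold state, last_time.
  rewrite (proj2 (Nat.ltb_lt _ _)); [reflexivity | exact (time_poised_lt j n Hp Hj)].
Qed.

Lemma state_poised_inj (i j : nat) : i < n -> j < n -> poised (L i) -> poised (L j) ->
  state i = state j -> i = j.
Proof.
  intros Hi Hj Hpi Hpj; rewrite (state_poised i), (state_poised j) by assumption.
  apply time_poised_inj; assumption.
Qed.

Lemma state_succ (j : nat) : j < n -> poised (L j) -> state (S j) = step (state j).
Proof.
  intros Hj Hp; rewrite (state_poised j Hj Hp); unfold state, step.
  rewrite time_S_poised by exact Hp; reflexivity.
Qed.

Lemma state_loop : loops_back L n u -> state n = state u.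
Proof.
  intros (Hu & Hpu & _); rewrite (state_poised u Hu Hpu).
  unfold state, loop_time; rewrite Nat.ltb_irrefl; reflexivity.
Qed.

Lemma state_0 : state 0 = 0.
Proof.
  unfold state, loop_time; simpl; destruct (0 <? last_time) eqn:E; [reflexivity|].
  apply Nat.ltb_ge in E; pose proof (time_mono u n u_le_n); unfold last_time in E; lia.
Qed.

Lemma run_le (t : nat) : run step 0 t <= last_time.
Proof.
  destruct t as [|t]; [simpl; lia|]; unfold run; rewrite Nat.iter_succ; unfold step.
  destruct (_ <? _) eqn:E; [apply Nat.ltb_lt in E; lia|].
  apply time_mono, u_le_n.
Qed.

Lemma transition_step (j : nat) : j < n -> poised (L j) -> transition_child (L j) (L (S j)).
Proof. intros Hj Hp; destruct (branch_steps j Hj) as [[]|[]]; tauto. Qed.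

Lemma not_poised_lt (i : nat) (f : form) :
  i <= n -> ~ poised (L i) -> In f (L i) -> i < n.
Proof.
  intros Hi Hp Hf; destruct (Nat.eq_dec i n) as [->|]; [|lia].
  destruct branch_end as [Hnil|[]]; [rewrite Hnil in Hf; destruct Hf | contradiction].
Qed.

Lemma block_fate (f : form) : forall d i, n - i <= d -> i <= n -> In f (L i) ->
  (exists j, i <= j <= n /\ time j = time i /\ poised (L j) /\ In f (L j)) \/
  (exists j, i <= j < n /\ time (S j) = time i /\ decomposed f (L (S j))).
Proof.
  induction d as [|d IH]; intros i Hd Hi Hf;
    (destruct (classic (poised (L i))) as [Hp|Hnp];
     [left; exists i; split; [lia | tauto]|]);
    pose proof (not_poised_lt i f Hi Hnp Hf) as Hlt; [lia|].
  assert (Hst : static_step (L i) (L (S i))) by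
    (destruct (branch_steps i Hlt) as [[]|[]]; tauto).
  pose proof (time_S_not_poised i Hnp) as Ht.
  destruct (classic (In f (L (S i)))) as [Hin|Hnin].
  - destruct (IH (S i)) as [(j & ? & ? & ?)|(j & ? & ? & ?)]; try lia; auto.
    + left; exists j; split; [lia | split; [lia | tauto]].
    + right; exists j; split; [lia | split; [lia | assumption]].
  - right; exists i; split; [lia | split; [exact Ht|]].
    apply (static_step_decomposed (L i)); assumption.
Qed.

Lemma elementary_block (f : form) (i : nat) : i <= n -> In f (L i) -> elementary f ->
  exists j, i <= j <= n /\ time j = time i /\ poised (L j) /\ In f (L j).
Proof.
  intros Hi Hf He.
  destruct (block_fate f (n - i) i (le_n _) Hi Hf) as [Hj|(j & _ & _ & Hd)]; [exact Hj|].
  exfalso; exact (elementary_not_decomposed _ _ He Hd).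
Qed.

Lemma nonelementary_block (f : form) (i : nat) : i <= n -> In f (L i) -> ~ elementary f ->
  exists j, i <= j < n /\ time (S j) = time i /\ decomposed f (L (S j)).
Proof.
  intros Hi Hf He.
  destruct (block_fate f (n - i) i (le_n _) Hi Hf) as [(j & _ & _ & [_ [_ Hel]] & Hfj)|Hj];
    [exfalso; exact (He (Hel f Hfj)) | exact Hj].
Qed.

Lemma decomposed_at_state (f : form) (i : nat) : i <= n -> In f (L i) -> ~ elementary f ->
  exists k, k <= n /\ state k = state i /\ decomposed f (L k).
Proof.
  intros Hi Hf He; destruct (nonelementary_block f i Hi Hf He) as (j & ? & Ht & Hd).
  exists (S j); split; [lia | split; [apply state_of_time, Ht | exact Hd]].
Qed.

Lemma elementary_at_poised (f : form) (i : nat) : i <= n -> In f (L i) -> elementary f ->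
  exists j, j < n /\ poised (L j) /\ In f (L j) /\ state j = state i.
Proof.
  intros Hi Hf He; destruct (elementary_block f i Hi Hf He) as (j & ? & Ht & Hp & Hfj).
  destruct (Nat.eq_dec j n) as [->|].
  - destruct branch_end as [Hnil|[_ Hloop]]; [rewrite Hnil in Hfj; destruct Hfj|].
    pose proof (state_loop Hloop) as Hstate; destruct Hloop as (Hu & Hpu & Hsub & _).
    exists u; split; [exact Hu | split; [exact Hpu | split; [now apply Hsub|]]].
    rewrite <- Hstate; now apply state_of_time.
  - exists j; split; [lia | split; [exact Hp | split; [exact Hfj | now apply state_of_time]]].
Qed.

Lemma elementary_successor (f : form) (i : nat) : i <= n -> In f (L i) -> elementary f ->
  exists j, j < n /\ In f (L j) /\ transition_child (L j) (L (S j)) /\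
            state (S j) = step (state i).
Proof.
  intros Hi Hf He; destruct (elementary_at_poised f i Hi Hf He) as (j & Hj & Hp & Hfj & Hs).
  exists j; split; [exact Hj | split; [exact Hfj | split]].
  - now apply transition_step.
  - now rewrite state_succ, Hs.
Qed.

Section Until.

Variables a b : form.

Hypothesis a_sound : forall i, i <= n -> In a (L i) -> sat (state i) a.
Hypothesis b_sound : forall i, i <= n -> In b (L i) -> sat (state i) b.

(* The second clause closes the loop; the third lets the eventuality
   guaranteed by LOOP fulfil the postponed formula. *)
Definition postponed (i : nat) : Prop :=
  In (Next (Until a b)) (L n) /\
  (sat (step (state n)) (Until a b) -> sat (state i) (Until a b)) /\
  (forall w, i <= w <= n -> sat (state w) (Until a b) -> sat (state i) (Until a b)).

Lemma until_chain : forall d i, n - i <= d -> i <= n -> In (Until a b) (L i) ->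
  sat (state i) (Until a b) \/ postponed i.
Proof.
  induction d as [|d IH]; intros i Hd Hi Hin;
    destruct (nonelementary_block _ i Hi Hin ltac:(simpl; tauto))
      as (j & Hj & Ht & [Hb|[Ha Hx]]); try lia.
  { left; apply holds_run_until_now; rewrite <- (state_of_time _ _ Ht).
    apply b_sound; [lia | exact Hb]. }
  assert (Hai : sat (state i) a) by
    (rewrite <- (state_of_time _ _ Ht); apply a_sound; [lia | exact Ha]).
  destruct (elementary_block _ (S j) ltac:(lia) Hx I) as (j2 & Hj2 & Ht2 & Hp2 & Hx2).
  rewrite Ht in Ht2.
  assert (Hsame : forall w, i <= w <= j2 -> state w = state i).
  { intros w Hw; apply state_of_time, (time_between i w j2); lia. }
  destruct (Nat.eq_dec j2 n) as [->|Hne].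
  - right; split; [exact Hx2 | split].
    + intro Hnext; apply holds_run_until_later; [exact Hai|].
      now rewrite <- (Hsame n) by lia.
    + intros w Hw; rewrite (Hsame w Hw); tauto.
  - assert (Hsucc : state (S j2) = step (state i)) by
      (rewrite state_succ by (lia || assumption); f_equal; apply Hsame; lia).
    assert (Hin2 : In (Until a b) (L (S j2))) by
      (apply (transition_step j2); [lia | exact Hp2 | left; exact Hx2]).
    destruct (IH (S j2) ltac:(lia) ltac:(lia) Hin2) as [Hsat|(Hxn & Hlast & Hlater)].
    + left; apply holds_run_until_later; [exact Hai | now rewrite <- Hsucc].
    + right; split; [exact Hxn | split].
      * intro Hnext; apply holds_run_until_later; [exact Hai|].
        rewrite <- Hsucc; exact (Hlast Hnext).
      * intros w Hw Hsw; destruct (le_lt_dec w j2) as [Hwj|Hwj].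
        -- rewrite <- (Hsame w); [exact Hsw | lia].
        -- apply holds_run_until_later; [exact Hai|].
           rewrite <- Hsucc; apply (Hlater w); [lia | exact Hsw].
Qed.

Lemma until_sound (i : nat) : i <= n -> In (Until a b) (L i) -> sat (state i) (Until a b).
Proof.
  intros Hi Hin.
  destruct (until_chain (n - i) i (le_n _) Hi Hin) as [Hsat|(Hx & Hlast & _)]; [exact Hsat|].
  apply Hlast.
  destruct branch_end as [Hnil|[_ Hloop]]; [rewrite Hnil in Hx; destruct Hx|].
  rewrite (state_loop Hloop); destruct Hloop as (Hu & Hpu & Hsub & Hev).
  rewrite <- state_succ by assumption.
  assert (Hin' : In (Until a b) (L (S u))) by
    (apply (transition_step u Hu Hpu); left; apply Hsub, Hx).
  destruct (until_chain (n - S u) (S u) (le_n _) ltac:(lia) Hin')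
    as [Hsat|(_ & _ & Hlater)]; [exact Hsat|].
  destruct (Hev a b (Hsub _ Hx)) as (w & Huw & Hwn & Hbw).
  apply (Hlater w); [lia|].
  apply holds_run_until_now, b_sound; assumption.
Qed.

End Until.

Lemma neg_until_sound (a b : form) :
  (forall i, i <= n -> In (Neg a) (L i) -> ~ sat (state i) a) ->
  (forall i, i <= n -> In (Neg b) (L i) -> ~ sat (state i) b) ->
  forall i, i <= n -> In (Neg (Until a b)) (L i) -> ~ sat (state i) (Until a b).
Proof.
  intros Ha Hb i Hi Hin.
  apply (not_holds_run_until _ _
           (fun s => exists i, i <= n /\ In (Neg (Until a b)) (L i) /\ state i = s));
    [| | exists i; auto].
  - intros s (k & Hk & Hink & <-).
    destruct (decomposed_at_state _ k Hk Hink ltac:(simpl; tauto))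
      as (m & Hm & Hs & [[_ Hnb]|[Hnb _]]);
      rewrite <- Hs; apply Hb; assumption.
  - intros s (k & Hk & Hink & <-) Hsa.
    destruct (decomposed_at_state _ k Hk Hink ltac:(simpl; tauto))
      as (m & Hm & Hs & [[Hna _]|[_ Hx]]).
    + rewrite <- Hs in Hsa; contradiction (Ha m Hm Hna).
    + destruct (elementary_successor _ m Hm Hx I) as (j & Hj & Hxj & Htr & Hsj).
      exists (S j); split; [lia | split; [apply Htr; left; exact Hxj | now rewrite Hsj, Hs]].
Qed.

Lemma truth (f : form) :
  (forall i, i <= n -> In f (L i) -> sat (state i) f) /\
  (forall i, i <= n -> In (Neg f) (L i) -> ~ sat (state i) f).
Proof.
  induction f as [p| |f IH|a IHa b IHb|f IH|a IHa b IHb]; split; intros i Hi Hin.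
  - destruct (elementary_at_poised _ i Hi Hin I) as (j & ? & ? & ? & ?).
    exists j; auto.
  - destruct (elementary_at_poised _ i Hi Hin I) as (j & Hj & Hp & Hnj & Hs).
    change (~ valuation (state i) p); intros (j' & Hj' & Hp' & Hs' & Hpj').
    rewrite <- Hs' in Hs; rewrite (state_poised_inj j j' Hj Hj' Hp Hp' Hs) in Hnj.
    exact (proj1 (proj2 Hp') _ Hpj' Hnj).
  - exact I.
  - destruct (decomposed_at_state _ i Hi Hin ltac:(simpl; tauto)) as (_ & _ & _ & []).
  - exact (proj2 IH i Hi Hin).
  - destruct (decomposed_at_state _ i Hi Hin ltac:(simpl; tauto)) as (k & Hk & Hs & Hd).
    rewrite <- Hs; intro Hn; exact (Hn (proj1 IH k Hk Hd)).
  - destruct (decomposed_at_state _ i Hi Hin ltac:(simpl; tauto)) as (k & Hk & Hs & [Ha Hb]).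
    rewrite <- Hs; split; [apply IHa | apply IHb]; assumption.
  - destruct (decomposed_at_state _ i Hi Hin ltac:(simpl; tauto)) as (k & Hk & Hs & [Ha|Hb]);
      rewrite <- Hs; intros [Hsa Hsb];
      [exact (proj2 IHa k Hk Ha Hsa) | exact (proj2 IHb k Hk Hb Hsb)].
  - destruct (elementary_successor _ i Hi Hin I) as (j & Hj & Hfj & Htr & Hs).
    apply holds_run_next; rewrite <- Hs.
    apply (proj1 IH); [lia | apply Htr; left; exact Hfj].
  - destruct (elementary_successor _ i Hi Hin I) as (j & Hj & Hfj & Htr & Hs).
    intros Hsat%holds_run_next; rewrite <- Hs in Hsat.
    apply (proj2 IH (S j)); [lia | apply Htr; right; exists f; auto | exact Hsat].
  - exact (until_sound a b (proj1 IHa) (proj1 IHb) i Hi Hin).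
  - exact (neg_until_sound a b (proj2 IHa) (proj2 IHb) i Hi Hin).
Qed.

Lemma ticked_branch_satisfiable (f : form) : In f (L 0) -> satisfiable f.
Proof.
  intro Hf.
  exists {k | k <= last_time}, (fun _ _ => True), (fun s p => valuation (proj1_sig s) p).
  split; [apply finite_bounded_nat|]; split; [intro s; exists s; exact I|].
  exists (fun t => exist _ (run step 0 t) (run_le t)); split; [intro; exact I|].
  apply (holds_iff valuation _ f (run step 0)); [reflexivity|].
  rewrite <- state_0; apply (proj1 (truth f)); [lia | exact Hf].
Qed.

End TickedBranch.

Definition closed_branch (br : list label) : Prop :=
  static_tick (lab br (length br - 1)) \/ (poised (lab br (length br - 1)) /\ loop_cond br).

Lemma lab_last (anc : list label) (G : label) : lab (anc ++ [G]) (length (anc ++ [G]) - 1) = G.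
Proof.
  unfold lab; rewrite length_app; simpl.
  replace (length anc + 1 - 1) with (length anc) by lia; apply nth_middle.
Qed.

Definition stepwise (br : list label) : Prop :=
  forall i, S i < length br -> branch_step (lab br i) (lab br (S i)).

Lemma stepwise_cons (G : label) (br : list label) :
  branch_step G (lab br 0) -> stepwise br -> stepwise (G :: br).
Proof. intros HG Hbr [|i] Hi; [exact HG | apply Hbr; simpl in Hi; lia]. Qed.

Lemma ticked_branch (up : bool) (t : tree) : forall anc, valid up anc t -> has_ticked_leaf t ->
  exists br, lab br 0 = root_label t /\ stepwise br /\ closed_branch (anc ++ br).
Proof.
  induction t as [G m|G t1 IH|G t1 IH1 t2 IH2]; intros anc Hv Ht; simpl in Hv, Ht.
  - destruct m; try contradiction.
    exists [G]; split; [reflexivity | split; [intros i Hi; simpl in Hi; lia |]].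
    unfold closed_branch; rewrite lab_last; exact Hv.
  - destruct Hv as [Hs Hv]; destruct (IH (anc ++ [G]) Hv Ht) as (br & H0 & Hc & Hf).
    exists (G :: br); split; [reflexivity | split; [|now rewrite <- app_assoc in Hf]].
    apply stepwise_cons; [rewrite H0; unfold branch_step, static_step; tauto | exact Hc].
  - destruct Hv as (Hnp & Hs & Hv1 & Hv2).
    destruct Ht as [Ht|Ht];
      [destruct (IH1 (anc ++ [G]) Hv1 Ht) as (br & H0 & Hc & Hf)
      |destruct (IH2 (anc ++ [G]) Hv2 Ht) as (br & H0 & Hc & Hf)];
      exists (G :: br); (split; [reflexivity | split; [|now rewrite <- app_assoc in Hf]]);
      apply stepwise_cons; try exact Hc;
      rewrite H0; left; (split; [exact Hnp | unfold static_step; eauto]).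
Qed.

Theorem mainTheorem2 :
  forall (up : bool) (phi : form) (t : tree),
    is_tableau up phi t -> has_ticked_leaf t -> satisfiable phi.
Proof.
  intros up phi t [Hroot Hvalid] Htick.
  destruct (ticked_branch up t [] Hvalid Htick) as (br & Hhead & Hsteps & Hclosed).
  rewrite Hroot in Hhead; rewrite app_nil_l in Hclosed.
  assert (Hsteps' : forall i, i < length br - 1 -> branch_step (lab br i) (lab br (S i)))
    by (intros i Hi; apply Hsteps; lia).
  assert (Hphi : In phi (lab br 0)) by (rewrite Hhead; left; reflexivity).
  destruct Hclosed as [Hnil|[Hp [u Hloop]]].
  - exact (ticked_branch_satisfiable (lab br) _ 0 Hsteps' (or_introl Hnil) (Nat.le_0_l _) phi Hphi).
  - apply (ticked_branch_satisfiable (lab br) _ u Hsteps' (or_intror (conj Hp Hloop)));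
      [destruct Hloop as [Hu _]; lia | exact Hphi].
Qed.
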